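(* Let $\mathbb{F}$ be a field and let $\mathcal{A}$ be a unital $\mathbb{F}$-algebra of dimension $n>2$. Then $l(\mathcal{A})=2^{n-2}$ if and only if $\mathcal{A}$ has a long basis $E=\{e_0,e_1,\ldots,e_{n-1}\}$ such that $e_pe_q\in\langle e_0,\ldots,e_{\max(p,q)}\rangle$ for all $p,q\in\{0,\ldots,n-1\}$ with $p\neq q$.
   Context: Algebras are finite-dimensional, unital, not necessarily associative. For a finite generating set $S$ of $\mathcal{A}$, a word in $S$ is any product (with any bracketing) of finitely many elements of $S$; its length is the number of factors, and $1$ is a word of length $0$. $L_i(S)$ is the linear span of all words in $S$ of length at most $i$. The length of $S$ is $l(S)=\min\{k\ge0: L_k(S)=\mathcal{A}\}$, and $l(\mathcal{A})=\max\{l(S): S\text{ a finite generating set of }\mathcal{A}\}$. (It is known that $2^{n-2}$ is the maximal possible length of such an algebra of dimension $n\ge2$.) A basis $\{e_0,e_1,\ldots,e_{n-1}\}$ of $\mathcal{A}$ is called long if $e_0=1$ and $e_i^2=e_{i+1}$ for $i=1,\ldots,n-2$. $\langle\cdot\rangle$ denotes linear span. *)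

(* Non-associative unital algebras: a finite-dimensional
   vector space V (vectType) over a field F with a bilinear product [mul]
   and a two-sided unit [one]. *)
From mathcomp Require Import all_boot all_order all_algebra.
Set Implicit Arguments. Unset Strict Implicit. Unset Printing Implicit Defensive.
Import GRing.Theory.
Local Open Scope ring_scope.

Section NonAssocAlgebra.
Variables (F : fieldType) (V : vectType F) (mul : V -> V -> V) (one : V).

(* bracketed words in k letters; Wone is the empty word 1 (length 0) *)
Inductive word (k : nat) : Type :=
  | Wone : word k
  | Wgen : 'I_k -> word k
  | Wmul : word k -> word k -> word k.

Fixpoint word_len k (w : word k) : nat :=
  match w with
  | Wone => 0
  | Wgen _ => 1
  | Wmul u v => word_len u + word_len v
  end.

Fixpoint word_eval (S : seq V) (w : word (size S)) : V :=
  match w with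
  | Wone => one
  | Wgen i => S`_i
  | Wmul u v => mul (word_eval u) (word_eval v)
  end.

Definition in_L (S : seq V) (i : nat) (v : V) : Prop :=
  exists ws : seq (word (size S)),
    all (fun w => word_len w <= i)%N ws /\ v \in span (map (word_eval (S:=S)) ws).

Definition L_full (S : seq V) (i : nat) : Prop := forall v : V, in_L S i v.

Definition generates (S : seq V) : Prop :=
  forall v : V, exists ws : seq (word (size S)),
    v \in span (map (word_eval (S:=S)) ws).

Definition set_length (S : seq V) (k : nat) : Prop :=
  L_full S k /\ forall j, L_full S j -> (k <= j)%N.

Definition alg_length (m : nat) : Prop :=
  (exists S : seq V, generates S /\ set_length S m) /\
  (forall (S : seq V) (k : nat), generates S -> set_length S k -> (k <= m)%N).

Definition long_basis (n : nat) (e : seq V) : Prop :=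
  [/\ size e = n, basis_of fullv e, e`_0 = one &
      forall i, (1 <= i)%N -> (i <= n - 2)%N -> mul e`_i e`_i = e`_i.+1].

End NonAssocAlgebra.

(* If L_k(S) is not the whole algebra then dim L_(2k)(S) > dim L_k(S), for
   otherwise L_k(S) would be a subalgebra containing S.  As dim L_1(S) >= 2,
   every generating set has length at most 2^(n-2), and a set of maximal length
   grows by exactly one dimension at each doubling: L_j(S) has dimension k+1
   for 2^(k-1) <= j < 2^k.  Any x in L_1(S) \ L_0(S) then gives the long basis
   e_0 = 1, e_(i+1) = x^(2^i), where e_p e_q (p <> q) has length less than
   2^max(p,q) and so lies in <e_0, ..., e_max(p,q)>.  Conversely, for such a
   basis every word of length below 2^k in e_1 stays in <e_0, ..., e_k>, so
   e_1 needs words of length 2^(n-2) to reach e_(n-1). *)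

From mathcomp Require Import all_boot all_order all_algebra.
From mathcomp Require Import zify.
From Stdlib Require Import Classical ClassicalEpsilon.
Set Implicit Arguments. Unset Strict Implicit. Unset Printing Implicit Defensive.
Import GRing.Theory.
Local Open Scope ring_scope.

Local Notation flag e k := (<<take k.+1 e>>%VS).

Lemma pred_pow2_addn k : ((2 ^ k).-1 + 2 ^ k = (2 ^ k.+1).-1)%N.
Proof. by rewrite expnS; have := expn_gt0 2 k; lia. Qed.

Lemma pow2_le_pred_pow2S k : (2 ^ k <= (2 ^ k.+1).-1)%N.
Proof. by rewrite -pred_pow2_addn leq_addl. Qed.

Lemma half_pow2_le_pred j k : (j <= k)%N -> ((2 ^ j)./2 <= (2 ^ k).-1)%N.
Proof. by move=> jk; have := leq_pexp2l (isT : 0 < 2)%N jk; have := expn_gt0 2 j; lia. Qed.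

Lemma mem_map_all (T : Type) (U : eqType) (P : pred T) (f : T -> U) ts x :
  all P ts -> x \in map f ts -> exists2 t, P t & x = f t.
Proof.
elim: ts => //= t ts IHts /andP[Pt Pts]; rewrite inE => /orP[/eqP->|]; last exact: IHts.
by exists t.
Qed.

Section VectorSpace.
Variables (F : fieldType) (V : vectType F).

Lemma ltn_dimvS (U W : {vspace V}) x :
  (U <= W)%VS -> x \in W -> x \notin U -> (\dim U < \dim W)%N.
Proof.
by move=> UW xW xU; rewrite (ltn_leqif (dimv_leqif_sup UW)); apply/subvPn; exists x.
Qed.

Lemma dimv_full (U : {vspace V}) :
  (\dim (fullv : {vspace V}) <= \dim U)%N -> U = fullv.
Proof. by move=> dimU; apply/eqP; rewrite eqEdim subvf. Qed.

Lemma dimv_lt_full (U : {vspace V}) :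
  U != fullv -> (\dim U < \dim (fullv : {vspace V}))%N.
Proof. by apply: contraNT; rewrite -leqNgt => /dimv_full->. Qed.

Lemma nth_in_flag (e : seq V) i k :
  (i <= k)%N -> (i < size e)%N -> e`_i \in flag e k.
Proof.
move=> ik ie; apply: memv_span; rewrite -(nth_take 0 (_ : i < k.+1)%N) //.
by apply: mem_nth; rewrite size_take_min leq_min ltnS ik.
Qed.

Lemma flag_mono (e : seq V) k l :
  (k <= l)%N -> (flag e k <= flag e l)%VS.
Proof.
move=> kl; apply/span_subvP => x /(nthP 0)[i]; rewrite size_take_min leq_min.
by case/andP=> ik ie <-; rewrite nth_take // nth_in_flag // (leq_trans _ kl).
Qed.

Lemma spanning_subseq_ex (T : Type) (f : T -> V) (P : pred T) :
  exists ts : seq T, all P ts /\ forall t, P t -> f t \in <<map f ts>>%VS.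
Proof.
suff: forall c ts, all P ts -> (\dim (fullv : {vspace V}) <= \dim <<map f ts>> + c)%N ->
    exists ts : seq T, all P ts /\ forall t, P t -> f t \in <<map f ts>>%VS.
  by move/(_ _ [::] isT (leq_addl _ _)).
elim=> [|c IHc] ts Pts.
  by rewrite addn0 => /dimv_full span_full; exists ts; split=> // t _; rewrite span_full memvf.
move=> dim_ts; case: (classic (exists t, P t /\ f t \notin <<map f ts>>%VS)).
  case=> t [Pt ft_out]; apply: (IHc (t :: ts)); first by rewrite /= Pt.
  rewrite /= span_cons (leq_trans dim_ts) // addnS -addSn leq_add2r.
  by apply: (ltn_dimvS (addvSr _ _) _ ft_out); apply/(subvP (addvSl _ _))/memv_line.
move=> no_t; exists ts; split=> // t Pt; apply/negPn/negP => ft_out; apply: no_t; by exists t.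
Qed.

End VectorSpace.

Section UnitalAlgebra.
Variables (F : fieldType) (V : vectType F) (mul : V -> V -> V) (one : V).
Hypothesis mulDl : forall (a : F) (x y z : V), mul (a *: x + y) z = a *: mul x z + mul y z.
Hypothesis mulDr : forall (a : F) (x y z : V), mul z (a *: x + y) = a *: mul z x + mul z y.
Hypothesis mul1x : forall x : V, mul one x = x.
Hypothesis mulx1 : forall x : V, mul x one = x.

Local Notation N := (\dim (fullv : {vspace V})).

Lemma mul0x z : mul 0 z = 0.
Proof.
have := mulDl 1 0 0 z; rewrite scaler0 addr0 scale1r => double.
by apply: (addrI (mul 0 z)); rewrite addr0 -double.
Qed.

Lemma mulx0 z : mul z 0 = 0.
Proof.
have := mulDr 1 0 0 z; rewrite scaler0 addr0 scale1r => double.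
by apply: (addrI (mul z 0)); rewrite addr0 -double.
Qed.

Lemma mul_sumx I (r : seq I) (a : I -> F) (f : I -> V) z :
  mul (\sum_(i <- r) a i *: f i) z = \sum_(i <- r) a i *: mul (f i) z.
Proof. by elim: r => [|i r IHr]; rewrite ?big_nil ?mul0x // !big_cons mulDl IHr. Qed.

Lemma mulx_sum I (r : seq I) (a : I -> F) (f : I -> V) z :
  mul z (\sum_(i <- r) a i *: f i) = \sum_(i <- r) a i *: mul z (f i).
Proof. by elim: r => [|i r IHr]; rewrite ?big_nil ?mulx0 // !big_cons mulDr IHr. Qed.

Lemma mul_span (X Y : seq V) (W : {vspace V}) u v :
  u \in <<X>>%VS -> v \in <<Y>>%VS ->
  (forall x y, x \in X -> y \in Y -> mul x y \in W) -> mul u v \in W.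
Proof.
move=> /(coord_span (X := in_tuple X))-> /(coord_span (X := in_tuple Y))-> mulXY.
rewrite mul_sumx; apply: memv_suml => i _; apply: memvZ.
by rewrite mulx_sum; apply: memv_suml => j _; apply/memvZ/mulXY; apply: mem_nth.
Qed.

Lemma mul_flag (e : seq V) p q (W : {vspace V}) u v :
  u \in flag e p -> v \in flag e q ->
  (forall i j, (i <= p)%N -> (j <= q)%N -> (i < size e)%N -> (j < size e)%N ->
     mul e`_i e`_j \in W) ->
  mul u v \in W.
Proof.
move=> u_p v_q mul_e; apply: (mul_span u_p v_q) => _ _ /(nthP 0)[i + <-] /(nthP 0)[j + <-].
rewrite !size_take_min !leq_min !ltnS => /andP[ip ie] /andP[jq je].
by rewrite !nth_take ?ltnS // mul_e.
Qed.

Lemma one_neq0 : (0 < N)%N -> one != 0.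
Proof.
rewrite lt0n; apply: contraNneq => one0; rewrite dimv_eq0 -subv0.
by apply/subvP => x _; rewrite -(mul1x x) one0 mul0x memv0.
Qed.

Section WordSpaces.
Variable S : seq V.
Local Notation ev := (word_eval mul one (S:=S)).
Local Notation wl := (@word_len (size S)).

Lemma eval_len0 w : wl w = 0%N -> ev w = one.
Proof.
elim: w => //= u IHu v IHv /eqP; rewrite addn_eq0 => /andP[/eqP/IHu-> /eqP/IHv->].
exact: mul1x.
Qed.

(* There are infinitely many words of bounded length (factors 1 can be
   inserted freely), so L_k(S) is spanned by a finite subfamily chosen once. *)
Definition Lwords k : seq (word (size S)) :=
  sval (constructive_indefinite_description _
    (spanning_subseq_ex ev (fun w => wl w <= k)%N)).

Definition Lsp k : {vspace V} := <<map ev (Lwords k)>>%VS.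

Lemma Lwords_len k : all (fun w => wl w <= k)%N (Lwords k).
Proof. by rewrite /Lwords; case: constructive_indefinite_description => ? /= []. Qed.

Lemma Lsp_word k w : (wl w <= k)%N -> ev w \in Lsp k.
Proof.
by rewrite /Lsp /Lwords; case: constructive_indefinite_description => ? /= [_]; apply.
Qed.

Lemma mem_Lwords k x : x \in map ev (Lwords k) -> exists2 w, (wl w <= k)%N & x = ev w.
Proof. exact/mem_map_all/Lwords_len. Qed.

Lemma Lsp_min k (U : {vspace V}) :
  (forall w, (wl w <= k)%N -> ev w \in U) -> (Lsp k <= U)%VS.
Proof. by move=> wordsU; apply/span_subvP => _ /mem_Lwords[w wk ->]; apply: wordsU. Qed.

Lemma Lsp_mono k l : (k <= l)%N -> (Lsp k <= Lsp l)%VS.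
Proof. by move=> kl; apply: Lsp_min => w wk; apply/Lsp_word/(leq_trans wk). Qed.

Lemma Lsp_mul k l u v : u \in Lsp k -> v \in Lsp l -> mul u v \in Lsp (k + l).
Proof.
move=> uk vl; apply: (mul_span uk vl) => _ _ /mem_Lwords[w wk ->] /mem_Lwords[w' w'l ->].
exact: (@Lsp_word _ (Wmul w w') (leq_add wk w'l)).
Qed.

Lemma one_Lsp k : one \in Lsp k.
Proof. exact: (@Lsp_word k (Wone _)). Qed.

Lemma Lsp0 : Lsp 0 = <[one]>%VS.
Proof.
apply: subv_anti; rewrite -memvE one_Lsp andbT.
by apply: Lsp_min => w; rewrite leqn0 => /eqP/eval_len0->; apply: memv_line.
Qed.

Lemma gen_Lsp1 j : (j < size S)%N -> S`_j \in Lsp 1.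
Proof. by move=> jS; apply: (@Lsp_word 1 (Wgen (Ordinal jS))). Qed.

Lemma in_LP k v : in_L mul one S k v <-> v \in Lsp k.
Proof.
split; last by move=> vk; exists (Lwords k); split=> //; apply: Lwords_len.
case=> ws [ws_k]; apply/subvP/span_subvP => _ /(mem_map_all ws_k)[w wk ->].
exact: Lsp_word.
Qed.

Lemma L_fullP k : L_full mul one S k <-> Lsp k = fullv.
Proof.
split=> k_full; last by move=> v; apply/in_LP; rewrite k_full memvf.
by apply/dimv_full/dimvS/subvP => v _; apply/in_LP.
Qed.

Lemma subalgebra_full (U : {vspace V}) :
  generates mul one S -> one \in U -> (forall j, (j < size S)%N -> S`_j \in U) ->
  (forall x y, x \in U -> y \in U -> mul x y \in U) -> U = fullv.
Proof.
move=> gen_S U1 US mulU; have evU w : ev w \in U.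
  by elim: w => //= [[j jS]|u IHu v IHv]; [apply: US | apply: mulU].
apply/dimv_full/dimvS/subvP => v _; have [ws] := gen_S v.
by apply/subvP/span_subvP => _ /(mem_map_all (all_predT ws))[w _ ->].
Qed.

Hypothesis gen_S : generates mul one S.

Lemma Lsp_double k :
  (1 <= k)%N -> Lsp k != fullv -> (\dim (Lsp k) < \dim (Lsp (k + k)))%N.
Proof.
move=> k_gt0; rewrite (ltn_leqif (dimv_leqif_sup (Lsp_mono (leq_addr k k)))).
apply: contraNT => /negbNE kk_k; apply/eqP/subalgebra_full => //; first exact: one_Lsp.
  by move=> j jS; apply: (subvP (Lsp_mono k_gt0)); apply: gen_Lsp1.
by move=> x y xk yk; apply: (subvP kk_k); apply: Lsp_mul.
Qed.

Lemma dim_Lsp_double s k : (1 <= k)%N ->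
  Lsp (2 ^ s * k) = fullv \/ (\dim (Lsp k) + s <= \dim (Lsp (2 ^ s * k)))%N.
Proof.
move=> k_gt0; elim: s => [|s IHs]; first by right; rewrite mul1n addn0.
have -> : (2 ^ s.+1 * k = 2 ^ s * k + 2 ^ s * k)%N by rewrite expnS -mulnA mul2n addnn.
have [sk_full|sk_not_full] := eqVneq (Lsp (2 ^ s * k)) fullv.
  by left; apply/dimv_full; rewrite -sk_full dimvS ?Lsp_mono ?leq_addr.
case: IHs => [/eqP|dim_sk]; first by rewrite (negPf sk_not_full).
right; rewrite addnS; apply: leq_ltn_trans dim_sk (Lsp_double _ sk_not_full).
by rewrite muln_gt0 expn_gt0 k_gt0.
Qed.

Hypothesis N_gt1 : (1 < N)%N.

Lemma dim_Lsp1 : Lsp 1 = fullv \/ (2 <= \dim (Lsp 1))%N.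
Proof.
have [|L1_not_full] := eqVneq (Lsp 1) fullv; [by left | right].
have one_L1 : (<[one]> <= Lsp 1)%VS by rewrite -memvE one_Lsp.
have dim_one : \dim <[one]> = 1%N by rewrite dim_vline one_neq0 // ltnW.
case: (classic (exists2 j, (j < size S)%N & S`_j \notin <[one]>%VS)).
  by case=> j jS Sj_out; have := ltn_dimvS one_L1 (gen_Lsp1 jS) Sj_out; rewrite dim_one.
move=> S_in_one; suff one_full : <[one]>%VS = fullv by move: N_gt1; rewrite -one_full dim_one.
apply: subalgebra_full => //; first exact: memv_line.
  by move=> j jS; apply/negPn/negP => Sj_out; apply: S_in_one; exists j.
move=> x y; rewrite -span_seq1 => x1 y1; apply: (mul_span x1 y1) => a b.
by rewrite !inE => /eqP-> /eqP->; rewrite mul1x memv_span1.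
Qed.

Lemma dim_Lsp_pow2 t : Lsp (2 ^ t) = fullv \/ (t + 2 <= \dim (Lsp (2 ^ t)))%N.
Proof.
case: dim_Lsp1 => [L1_full|dim_L1].
  by left; apply/dimv_full; rewrite -L1_full dimvS ?Lsp_mono ?expn_gt0.
have := dim_Lsp_double t (leqnn 1); rewrite muln1 => -[|dim_t]; [by left | right].
by rewrite addnC (leq_trans _ dim_t) ?leq_add2r.
Qed.

Lemma Lsp_pow2_full : Lsp (2 ^ (N - 2)) = fullv.
Proof.
case: (dim_Lsp_pow2 (N - 2)) => // dim_N.
by apply: dimv_full; rewrite (leq_trans _ dim_N) // subnK.
Qed.

End WordSpaces.

Fixpoint square_word (m : nat) : word 1 :=
  if m is m'.+1 then Wmul (square_word m') (square_word m') else Wgen ord0.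

Lemma square_word_len m : word_len (square_word m) = (2 ^ m)%N.
Proof. by elim: m => //= m ->; rewrite expnS mul2n addnn. Qed.

Section LongBasis.
Variables (n : nat) (e : seq V).
Hypothesis n_gt2 : (2 < n)%N.
Hypothesis size_e : size e = n.
Hypothesis e_basis : basis_of fullv e.
Hypothesis e0 : e`_0 = one.
Hypothesis e_sq : forall i, (1 <= i)%N -> (i <= n - 2)%N -> mul e`_i e`_i = e`_i.+1.
Hypothesis e_mul : forall p q, (p < n)%N -> (q < n)%N -> p != q ->
  mul e`_p e`_q \in flag e (maxn p q).

Lemma mul_flag_lt k p q u v :
  (k < n)%N -> (p <= k)%N -> (q <= k)%N -> (p < k)%N || (q < k)%N ->
  u \in flag e p -> v \in flag e q -> mul u v \in flag e k.
Proof.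
move=> kn pk qk pq_lt u_p v_q; apply: (mul_flag u_p v_q) => i j ip jq ie je.
have [eq_ij|ij] := eqVneq i j; last first.
  by apply: (subvP (flag_mono _ _)) (e_mul _ _ ij); rewrite -?size_e // geq_max; lia.
subst j; clear je.
have ik : (i < k)%N by case/orP: pq_lt; lia.
case: i ip jq ie ik => [|i] ip jq ie ik.
  by rewrite e0 mul1x -e0 nth_in_flag ?size_e; lia.
by rewrite e_sq ?nth_in_flag ?size_e; lia.
Qed.

Local Notation ev1 := (word_eval mul one (S:=[:: e`_1])).

Lemma eval_flag (w : word 1) k : (word_len w < 2 ^ k)%N -> (k < n)%N -> ev1 w \in flag e k.
Proof.
elim: w k => [|i|u IHu v IHv] k /= w_len kn.
- by rewrite -e0 nth_in_flag ?size_e; lia.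
- rewrite ord1 /= nth_in_flag ?size_e //; last by lia.
  by case: k w_len {kn} => //; rewrite expn0.
case: k w_len kn => [|k] w_len kn.
  have [u0 v0] : word_len u = 0%N /\ word_len v = 0%N by rewrite expn0 in w_len; lia.
  by rewrite !eval_len0 // mul1x -e0 nth_in_flag ?size_e.
rewrite expnS mul2n -addnn in w_len.
have [ul|ul] := ltnP (word_len u) (2 ^ k); have [vl|vl] := ltnP (word_len v) (2 ^ k).
- by apply: (@mul_flag_lt _ k k); rewrite ?IHu ?IHv //; lia.
- by apply: (@mul_flag_lt _ k k.+1); rewrite ?IHu ?IHv // ?expnS; lia.
- by apply: (@mul_flag_lt _ k.+1 k); rewrite ?IHu ?IHv // ?expnS; lia.
- lia.
Qed.

Lemma eval_square_word m : (m <= n - 2)%N -> ev1 (square_word m) = e`_m.+1.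
Proof. by elim: m => //= m IHm m_le; rewrite IHm ?e_sq //; lia. Qed.

Lemma Lsp_e1_full : Lsp [:: e`_1] (2 ^ (n - 2)) = fullv.
Proof.
have /andP[/eqP span_e _] := e_basis.
apply/dimv_full; rewrite -span_e; apply/dimvS/span_subvP => x /(nthP 0)[i].
rewrite size_e; case: i => [|m] m_lt <-; first by rewrite e0 one_Lsp.
rewrite -(@eval_square_word m); last by lia.
by apply: Lsp_word; rewrite square_word_len leq_pexp2l //; lia.
Qed.

Lemma Lsp_e1_sub j : (j < 2 ^ (n - 2))%N -> (Lsp [:: e`_1] j <= flag e (n - 2))%VS.
Proof.
by move=> jn; apply: Lsp_min => w wj; apply: eval_flag; [exact: leq_ltn_trans wj jn | lia].
Qed.

Hypothesis dim_n : \dim (fullv : {vspace V}) = n.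

Lemma e1_set_length : set_length mul one [:: e`_1] (2 ^ (n - 2)).
Proof.
split=> [|j /L_fullP j_full]; first exact/L_fullP/Lsp_e1_full.
rewrite leqNgt; apply/negP => /Lsp_e1_sub; rewrite j_full => /dimvS.
rewrite dim_n => /leq_trans/(_ (dim_span _)); rewrite size_takel ?size_e; lia.
Qed.

Lemma long_basis_alg_length : alg_length mul one (2 ^ (n - 2)).
Proof.
split=> [|S k gen_S [_ k_min]].
  exists [:: e`_1]; split=> [v|]; last exact: e1_set_length.
  by have [ws [_ v_ws]] := proj1 e1_set_length v; exists ws.
by apply/k_min/L_fullP; rewrite -dim_n Lsp_pow2_full // dim_n; lia.
Qed.

End LongBasis.

Section ExtremalLength.
Variables (S : seq V) (n : nat).
Hypothesis n_gt2 : (2 < n)%N.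
Hypothesis dim_n : \dim (fullv : {vspace V}) = n.
Hypothesis gen_S : generates mul one S.
Hypothesis S_len : set_length mul one S (2 ^ (n - 2)).

Local Notation L := (Lsp S).
Local Notation ev := (word_eval mul one (S:=S)).

Let N_gt1 : (1 < \dim (fullv : {vspace V}))%N.
Proof. by rewrite dim_n; lia. Qed.

Lemma Lsp_not_full j : (j < 2 ^ (n - 2))%N -> L j != fullv.
Proof. by move=> jn; apply/eqP => /L_fullP/(proj2 S_len); lia. Qed.

Lemma Lsp_pow2_le_pred k : (L (2 ^ k) <= L (2 ^ k.+1).-1)%VS.
Proof. exact/Lsp_mono/pow2_le_pred_pow2S. Qed.

Lemma dim_Lsp_pow2_ge k : (k.+1 < n)%N -> (k + 2 <= \dim (L (2 ^ k)))%N.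
Proof.
by have [->|] := dim_Lsp_pow2 gen_S N_gt1 k; rewrite // dim_n; lia.
Qed.

(* Otherwise the doublings from (2^k).-1 up to 2^(n-2) would each add a
   dimension and fill the whole space too early. *)
Lemma dim_Lsp_pred_pow2_le k : (k < n)%N -> (\dim (L (2 ^ k).-1) <= k.+1)%N.
Proof.
case: k => [|k] kn; first by rewrite Lsp0 dim_vline; case: (one != 0).
have [->|k_lt] := eqVneq k.+1 (n - 1)%N.
  by rewrite (leq_trans (dimvS (subvf _))) // dim_n; lia.
set s := (n - 2 - k.+1)%N; set m := (2 ^ k.+1).-1.
have m_gt0 : (0 < m)%N by rewrite /m expnS; have := expn_gt0 2 k; lia.
have sm_lt : (2 ^ s * m < 2 ^ (n - 2))%N.
  have -> : (2 ^ (n - 2) = 2 ^ s * 2 ^ k.+1)%N by rewrite -expnD /s; congr expn; lia.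
  by rewrite ltn_pmul2l ?expn_gt0 // /m prednK ?expn_gt0.
have [/eqP|dim_sm] := dim_Lsp_double gen_S s m_gt0.
  by rewrite (negPf (Lsp_not_full sm_lt)).
have := leq_ltn_trans dim_sm (dimv_lt_full (Lsp_not_full sm_lt)); rewrite dim_n /s; lia.
Qed.

Lemma dim_Lsp_pred_pow2 k : (k < n)%N -> \dim (L (2 ^ k).-1) = k.+1.
Proof.
move=> kn; apply/eqP; rewrite eqn_leq dim_Lsp_pred_pow2_le //=.
case: k kn => [|k] kn; first by rewrite Lsp0 dim_vline one_neq0 // ltnW.
by rewrite -addn2 (leq_trans (dim_Lsp_pow2_ge kn)) ?dimvS ?Lsp_pow2_le_pred.
Qed.

Lemma Lsp_pow2_stable k : (k.+1 < n)%N -> L (2 ^ k.+1).-1 = L (2 ^ k).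
Proof.
move=> kn; apply/esym/eqP; rewrite eqEdim Lsp_pow2_le_pred dim_Lsp_pred_pow2 //.
by rewrite -addn2 dim_Lsp_pow2_ge.
Qed.

Lemma Lsp1_not_sub_Lsp0 : ~~ (L 1 <= L 0)%VS.
Proof.
apply: contraTN isT => /dimvS.
by rewrite -[1%N]/(2 ^ 1).-1 -[0%N]/(2 ^ 0).-1 !dim_Lsp_pred_pow2 //; lia.
Qed.

Section LongSequence.
Variable x : V.
Hypothesis x_L1 : x \in L 1.
Hypothesis x_notin_L0 : x \notin L 0.

Local Notation sq y := (mul y y).

Definition long_seq := one :: mkseq (fun i => iter i (fun y => sq y) x) (n - 1).
Local Notation e := long_seq.

Lemma size_long_seq : size e = n.
Proof. by rewrite /= size_mkseq; lia. Qed.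

Lemma long_seqS i : (i < n - 1)%N -> e`_i.+1 = iter i (fun y => sq y) x.
Proof. by move=> i_lt; rewrite /= nth_mkseq. Qed.

Lemma long_seq_sq i : (1 <= i)%N -> (i <= n - 2)%N -> sq e`_i = e`_i.+1.
Proof. by case: i => // i _ i_le; rewrite !long_seqS //; lia. Qed.

Lemma long_seq_Lsp i : (i < n)%N -> e`_i \in L (2 ^ i)./2.
Proof.
case: i => [|i] i_lt; first exact: one_Lsp.
rewrite long_seqS; last by lia.
rewrite expnS mul2n doubleK; elim: i {i_lt} => //= i IHi.
by rewrite expnS mul2n -addnn; apply: Lsp_mul.
Qed.

Lemma long_seq_mul_Lsp i j k : (i <= k.+1)%N -> (j <= k)%N -> (k.+1 < n)%N ->
  mul e`_i e`_j \in L (2 ^ k.+1).-1 /\ mul e`_j e`_i \in L (2 ^ k.+1).-1.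
Proof.
move=> ik jk kn.
have ei : e`_i \in L (2 ^ i)./2 by apply: long_seq_Lsp; lia.
have ej : e`_j \in L (2 ^ j)./2 by apply: long_seq_Lsp; lia.
have len_ij : ((2 ^ i)./2 + (2 ^ j)./2 <= (2 ^ k.+1).-1)%N.
  rewrite -pred_pow2_addn addnC leq_add ?half_pow2_le_pred //.
  by rewrite -(doubleK (2 ^ k)%N) -mul2n -expnS half_leq // leq_pexp2l.
split; first exact: (subvP (Lsp_mono _ len_ij)) _ (Lsp_mul ei ej).
by rewrite addnC in len_ij; apply: (subvP (Lsp_mono _ len_ij)) _ (Lsp_mul ej ei).
Qed.

(* A word of length 2^(k+1) splits into two factors in <e_0, ..., e_(k+1)>,
   and of the products e_i e_j only e_(k+1)^2 needs 2^(k+1) letters. *)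
Lemma Lsp_pow2_sub k : (k.+1 < n)%N -> flag e k.+1 = L (2 ^ k.+1).-1 ->
  (L (2 ^ k.+1) <= L (2 ^ k.+1).-1 + <[sq e`_k.+1]>)%VS.
Proof.
move=> kn flag_k; have pow2_gt1 : (1 < 2 ^ k.+1)%N by rewrite expnS; have := expn_gt0 2 k; lia.
have sub := addvSl (L (2 ^ k.+1).-1) <[sq e`_k.+1]>.
apply: Lsp_min; elim=> [|j|u IHu v IHv] /= w_len.
- exact/(subvP sub)/one_Lsp.
- have L1_sub : (L 1 <= L (2 ^ k.+1).-1)%VS by apply: Lsp_mono; lia.
  by apply/(subvP sub)/(subvP L1_sub)/gen_Lsp1.
have [short|long] := leqP (word_len u + word_len v) (2 ^ k.+1).-1.
  by apply/(subvP sub); apply: (@Lsp_word _ _ (Wmul u v)).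
have [u0|u_gt0] := posnP (word_len u); first by rewrite eval_len0 // mul1x IHv //; lia.
have [v0|v_gt0] := posnP (word_len v); first by rewrite (eval_len0 v0) mulx1 IHu //; lia.
have [uk vk] : ev u \in flag e k.+1 /\ ev v \in flag e k.+1.
  by rewrite flag_k; split; apply: Lsp_word; lia.
apply: (mul_flag uk vk) => i i' ik i'k _ _.
have [/andP[/eqP-> /eqP->]|not_kk] := boolP ((i == k.+1) && (i' == k.+1)).
  by apply/(subvP (addvSr _ _))/memv_line.
apply/(subvP sub); move: not_kk; rewrite negb_and => /orP[i_ne | i'_ne].
  have i_le : (i <= k)%N by rewrite -ltnS ltn_neqAle i_ne ik.
  by case: (long_seq_mul_Lsp i'k i_le kn).
have i'_le : (i' <= k)%N by rewrite -ltnS ltn_neqAle i'_ne i'k.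
by case: (long_seq_mul_Lsp ik i'_le kn).
Qed.

Lemma long_seq_notin k :
  (k.+1 < n)%N -> flag e k = L (2 ^ k).-1 -> e`_k.+1 \notin L (2 ^ k).-1.
Proof.
case: k => [|k] kn flag_k; first by rewrite long_seqS //; lia.
rewrite -long_seq_sq; try lia; apply/negP => sq_in.
have sub : (L (2 ^ k.+1).-1 + <[sq e`_k.+1]> <= L (2 ^ k.+1).-1)%VS.
  by rewrite subv_add subvv -memvE.
have := dimvS (subv_trans (Lsp_pow2_sub (ltnW kn) flag_k) sub).
by rewrite -Lsp_pow2_stable // !dim_Lsp_pred_pow2 //; lia.
Qed.

Lemma flag_long_seq k : (k < n)%N -> flag e k = L (2 ^ k).-1.
Proof.
elim: k => [|k IHk] kn; first by rewrite /= take0 span_seq1 Lsp0.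
have flag_k := IHk (ltnW kn); set y := e`_k.+1.
have y_in : y \in L (2 ^ k.+1).-1.
  by rewrite Lsp_pow2_stable // -[X in L X](doubleK (2 ^ k)%N) -mul2n -expnS long_seq_Lsp.
have y_sum : y \in (L (2 ^ k).-1 + <[y]>)%VS by apply/(subvP (addvSr _ _))/memv_line.
have := ltn_dimvS (addvSl _ _) y_sum (long_seq_notin kn flag_k).
rewrite (take_nth 0) ?size_long_seq // -cats1 span_cat span_seq1 -/y flag_k => dim_sum.
have sub_k : (L (2 ^ k).-1 <= L (2 ^ k.+1).-1)%VS.
  by apply: Lsp_mono; rewrite -pred_pow2_addn leq_addr.
apply/eqP; rewrite eqEdim subv_add -memvE y_in sub_k /=.
by rewrite !dim_Lsp_pred_pow2 // in dim_sum *; lia.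
Qed.

Lemma long_seq_mul p q : (p < q)%N -> (q < n)%N ->
  mul e`_p e`_q \in flag e q /\ mul e`_q e`_p \in flag e q.
Proof.
case: q => // q pq qn; rewrite flag_long_seq //.
by have [] := long_seq_mul_Lsp (leqnn q.+1) (_ : p <= q)%N qn.
Qed.

Lemma long_seq_long_basis : long_basis mul one n e.
Proof.
split=> //; [exact: size_long_seq | | exact: long_seq_sq].
rewrite basisEdim size_long_seq dim_n leqnn andbT.
have -> : e = take (n - 2).+2 e by rewrite take_oversize // size_long_seq; lia.
rewrite flag_long_seq ?Lsp_pow2_stable; try lia.
by have /L_fullP-> := proj1 S_len.
Qed.

End LongSequence.

Lemma extremal_length_long_basis : exists e : seq V,
  long_basis mul one n e /\
  forall p q, (p < n)%N -> (q < n)%N -> p != q -> mul e`_p e`_q \in flag e (maxn p q).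
Proof.
have /subvPn[x x_L1 x_notin_L0] := Lsp1_not_sub_Lsp0.
exists (long_seq x); split=> [|p q pn qn]; first exact: long_seq_long_basis x_L1 x_notin_L0.
case: ltngtP => // [pq|qp] _.
  by case: (long_seq_mul x_L1 x_notin_L0 pq qn).
by case: (long_seq_mul x_L1 x_notin_L0 qp pn).
Qed.

End ExtremalLength.

End UnitalAlgebra.

Theorem theorem6p5 (F : fieldType) (V : vectType F) (mul : V -> V -> V) (one : V)
  (mulDl : forall (a : F) (x y z : V), mul (a *: x + y) z = a *: mul x z + mul y z)
  (mulDr : forall (a : F) (x y z : V), mul z (a *: x + y) = a *: mul z x + mul z y)
  (mul1x : forall x : V, mul one x = x)
  (mulx1 : forall x : V, mul x one = x)
  (n : nat) (hn : \dim (fullv : {vspace V}) = n) (n_gt2 : (2 < n)%N) :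
  alg_length mul one (2 ^ (n - 2)) <->
  exists e : seq V,
    long_basis mul one n e /\
    forall p q : nat, (p < n)%N -> (q < n)%N -> p != q ->
      mul e`_p e`_q \in span (take (maxn p q).+1 e).
Proof.
split=> [[[S [gen_S S_len]] _] | [e [[size_e e_basis e0 e_sq] e_mul]]].
  exact: (extremal_length_long_basis mulDl mulDr mul1x mulx1 n_gt2 hn gen_S S_len).
exact: (long_basis_alg_length mulDl mulDr mul1x n_gt2 size_e e_basis e0 e_sq e_mul hn).
Qed.
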